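(* Consider a D2D caching network with $K$ users each of cache size $M$ files, a library of $N$ files, no selfish users, and $\frac{MK}{N}>1$, using the random caching scheme described in the context. Then every request vector $(\mathsf{r}_1,\dots,\mathsf{r}_K)$ is recoverable by the users if all library files are encoded with an MDS code of rate $r$, where $r\in(0,1)$ is a real positive root of the polynomial $$f(r)=\sum_{i=0}^{K-1}\binom{K}{i}\Big(-\frac{M}{N}\Big)^{K-i}r^{K-i-1}+1 .$$
   Context: Random caching scheme: each of the $N$ library files of $B$ bits is divided into $I$ subfiles of $B/I$ bits, each regarded as a symbol of $\mathbb{F}_{2^{B/I}}$, and each file is encoded with an $(I, I/r)$ MDS code over $\mathbb{F}_{2^{B/I}}$ (codeword length $I/r$; any $I$ encoded symbols recover the file). Each user independently, for each file, selects uniformly at random $MI/N$ of the $I/r$ encoded-symbol indices and caches those symbols, so a given encoded symbol is cached by a given user with probability $Mr/N$. At the end of the delivery phase each user knows every encoded symbol of its requested file that is cached by at least one user; the number of encoded symbols of a file cached exclusively by a given set $\mathcal{P}$ of users is taken to be its typical value $(\frac{Mr}{N})^{|\mathcal{P}|}(1-\frac{Mr}{N})^{K-|\mathcal{P}|}\frac{I}{r}$ (law of large numbers, large $I$). A file is recoverable by a user if the user knows at least $I$ of its encoded symbols. *)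

From HB Require Import structures.
From mathcomp Require Import all_boot all_order all_algebra.
Set Implicit Arguments. Unset Strict Implicit. Unset Printing Implicit Defensive.
Import Order.TTheory GRing.Theory Num.Theory.
Local Open Scope ring_scope.

(* Probability that a given user caches a given encoded symbol: M r / N. *)
Definition cache_prob (R : realFieldType) (M N : nat) (r : R) : R :=
  M%:R * r / N%:R.

(* Typical number of encoded symbols of a file cached exclusively by the set
   P of users: (Mr/N)^|P| (1 - Mr/N)^(K-|P|) * I/r. *)
Definition excl_cached (R : realFieldType) (K M N I : nat) (r : R)
    (P : {set 'I_K}) : R :=
  (cache_prob M N r) ^+ #|P| * (1 - cache_prob M N r) ^+ (K - #|P|)
    * (I%:R / r).

(* Number of encoded symbols of file n known by user k at the end of the
   delivery phase: every encoded symbol of n cached by at least one user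
   (i.e. exclusively by some nonempty set of users). *)
Definition known_symbols (R : realFieldType) (K M N I : nat) (r : R)
    (k : 'I_K) (n : 'I_N) : R :=
  \sum_(P : {set 'I_K} | P != set0) excl_cached M N I r P.

Definition recoverable (R : realFieldType) (K M N I : nat) (r : R)
    (k : 'I_K) (n : 'I_N) : Prop :=
  I%:R <= known_symbols M I r k n.

Definition fpoly (R : realFieldType) (K M N : nat) (r : R) : R :=
  \sum_(i < K) 'C(K, i)%:R * (- (M%:R / N%:R)) ^+ (K - i) * r ^+ (K - i - 1)
  + 1.

From HB Require Import structures.
From mathcomp Require Import all_boot all_order all_algebra.
From mathcomp Require Import ring.
Import Order.TTheory GRing.Theory Num.Theory.
Local Open Scope ring_scope.

(* Write p = Mr/N for the caching probability.  Summing the typical counts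
   over all nonempty sets of users gives (1 - (1 - p)^K) I/r symbols, by the
   binomial theorem over subsets.  On the other hand, multiplying the
   polynomial sum in f by r and expanding (1 - p)^K = (1 - (M/N) r)^K shows
   that f(r) = 0 is exactly the fixed-point equation r = 1 - (1 - p)^K.
   Hence every user knows exactly I symbols of every file. *)

Lemma sum_subsets_binomial {R : comPzRingType} (K : nat) (p q : R) :
  \sum_(P : {set 'I_K}) p ^+ #|P| * q ^+ (K - #|P|) = (p + q) ^+ K.
Proof.
have := @bigA_distr R 0 1 *%R +%R _ (fun _ : 'I_K => p) (fun _ => q).
rewrite /= prodr_const card_ord => ->.
apply: eq_bigr => P _.
rewrite (bigID (mem P)) /=.
rewrite (eq_bigr (fun _ => p)); last by move=> i ->.
rewrite [X in _ = _ * X](eq_bigr (fun _ => q)); last by move=> i /negbTE ->.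
rewrite !prodr_const; congr (_ ^+ _ * _ ^+ _).
rewrite -[X in (X - _)%N](card_ord K) -(cardsC P) addKn.
by apply: eq_card => i; rewrite !inE.
Qed.

Lemma sum_nonempty_subsets_binomial {R : comPzRingType} (K : nat) (p : R) :
  \sum_(P : {set 'I_K} | P != set0) p ^+ #|P| * (1 - p) ^+ (K - #|P|)
    = 1 - (1 - p) ^+ K.
Proof.
have := sum_subsets_binomial K p (1 - p).
rewrite [p + _]addrC subrK expr1n (bigD1 set0) //= cards0 expr0 mul1r subn0.
by move=> sumE; apply: (addrI ((1 - p) ^+ K)); rewrite sumE addrC subrK.
Qed.

Lemma mulr_truncated_binomial {R : comPzRingType} (K : nat) (a r : R) :
  r * \sum_(i < K) 'C(K, i)%:R * (- a) ^+ (K - i) * r ^+ (K - i - 1)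
    = (1 - a * r) ^+ K - 1.
Proof.
rewrite big_distrr /= [1 - _]addrC exprDn big_ord_recr /=.
rewrite subnn expr0 expr1n mul1r binn mulr1n addrK.
apply: eq_bigr => i _.
rewrite expr1n mulr1 -mulNr exprMn -[in RHS]mulr_natl.
have -> : (K - i)%N = (K - i - 1).+1 by rewrite subn1 prednK // subn_gt0.
by rewrite subSS subn0 !exprS; ring.
Qed.

Lemma fpoly_root_fixed_point {R : realFieldType} {K M N : nat} {r : R} :
  fpoly K M N r = 0 -> r = 1 - (1 - cache_prob M N r) ^+ K.
Proof.
move=> f0.
have := mulr_truncated_binomial K (M%:R / N%:R) r.
rewrite (_ : (M%:R / N%:R) * r = cache_prob M N r); last first.
  by rewrite /cache_prob mulrAC.
move: f0; rewrite /fpoly => /eqP; rewrite addr_eq0 => /eqP ->.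
by rewrite mulrN1 => /eqP; rewrite eqr_oppLR opprB => /eqP.
Qed.

Lemma known_symbolsE (R : realFieldType) (K M N I : nat) (r : R)
    (k : 'I_K) (n : 'I_N) :
  known_symbols M I r k n = (1 - (1 - cache_prob M N r) ^+ K) * (I%:R / r).
Proof.
by rewrite /known_symbols /excl_cached -big_distrl sum_nonempty_subsets_binomial.
Qed.

Theorem theorem2 (R : realFieldType) (K M N I : nat) :
  (0 < N)%N -> (0 < I)%N ->
  1 < (M * K)%:R / N%:R :> R ->
  forall r : R, 0 < r < 1 -> fpoly K M N r = 0 ->
  forall req : 'I_K -> 'I_N, forall k : 'I_K,
    recoverable M I r k (req k).
Proof.
move=> _ _ _ r /andP[r_gt0 _] f0 req k.
rewrite /recoverable known_symbolsE -(fpoly_root_fixed_point f0).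
by rewrite mulrC divfK ?gt_eqF.
Qed.
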